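(* For every $\alpha\in(0,1)$, every set of $m$ statistical queries $\mathcal{Q}$ over a universe $U$ of size $N$ with query matrix $Q\in[0,1]^{m\times N}$, and every $n\in\mathbb{N}$, there exists \[ s=\frac5\alpha\cdot\mathrm{hdisc}^*(Q,n) \] such that for every dataset $x\in U^n$ whose elements are all distinct, there exists a dataset $y\in U^*$ of size at most $s$ with $\|\mathcal{Q}(x)-\mathcal{Q}(y)\|_\infty\le\alpha$.
   Context: A statistical query is $q:U\to\mathbb{R}$ with $q(x)=\frac1{|x|}\sum_{i}q(x_i)$ for a dataset $x$ (a finite sequence of elements of $U$); $\mathcal{Q}(x)=(q_1(x),\ldots,q_m(x))$; the query matrix has $i$-th row $(q_i(u))_{u\in U}$. $U^*$ denotes finite sequences over $U$. For an $m\times N$ matrix $Q$, $Q^*$ is the $(m+1)\times N$ matrix obtained by appending the all-ones row, $Q^*_S$ is its submatrix of columns in $S$, and $\mathrm{hdisc}^*(Q,w)=\max_{S\subseteq[N],|S|\le w}\min_{z\in\{\pm1\}^S}\|Q^*_Sz\|_\infty$. *)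

From mathcomp Require Import all_boot all_order all_algebra.
Set Implicit Arguments. Unset Strict Implicit. Unset Printing Implicit Defensive.
Import Order.TTheory GRing.Theory Num.Theory.
Local Open Scope ring_scope.

(* Universe: a finite type U (so N = #|U|); columns of the query matrix are
   indexed by U. A family of m statistical queries is q : 'I_m -> U -> R,
   i.e. the query matrix Q has entries Q i u = q i u. *)

(* Answer of statistical query q on dataset x : (1/|x|) sum_i q(x_i).
   (For the empty dataset this is 0, by MathComp's convention 0^-1 = 0.) *)
Definition sq_answer (R : realFieldType) (U : finType) (q : U -> R) (x : seq U) : R :=
  (size x)%:R^-1 * \sum_(u <- x) q u.

(* Rows of Q^*: the m rows of Q plus the all-ones row (indexed by None). *)
Definition qstar_row (R : realFieldType) (U : finType) (m : nat)
  (q : 'I_m -> U -> R) (r : option 'I_m) (u : U) : R :=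
  match r with Some i => q i u | None => 1 end.

(* || Q^*_S z ||_oo for a sign vector z in {+-1}^S, encoded by a boolean
   function on U (only its restriction to S matters): z_u = (-1)^(b u). *)
Definition qstar_norm (R : realFieldType) (U : finType) (m : nat)
  (q : 'I_m -> U -> R) (S : {set U}) (b : {ffun U -> bool}) : R :=
  \big[Num.max/0]_(r : option 'I_m)
     `| \sum_(u in S) qstar_row q r u * (-1) ^+ (b u) |.

(* min over sign vectors; the set of sign vectors is nonempty, so we take
   the minimum as a bigop with top element given by one sign vector. *)
Definition disc_star (R : realFieldType) (U : finType) (m : nat)
  (q : 'I_m -> U -> R) (S : {set U}) : R :=
  \big[Num.min/qstar_norm q S [ffun=> false]]_(b : {ffun U -> bool})
     qstar_norm q S b.

Definition hdisc_star (R : realFieldType) (U : finType) (m : nat)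
  (q : 'I_m -> U -> R) (w : nat) : R :=
  \big[Num.max/disc_star q set0]_(S : {set U} | (#|S| <= w)%N) disc_star q S.

(* Let h = hdisc^*(Q, n) and let X be the set of points of x, so every subset
   of X has a colouring z with |Q^*_S z| <= h.  For such a colouring of S, the
   all-ones row says that the two colour classes differ in size by at most h,
   and the rows of Q say that keeping the larger class T moves every query mean
   by at most h/|T|.  Halve X in this way while alpha |S| > 5h.  The sizes
   shrink by a factor of at least 3/2, so the errors h/|T| telescope against
   the potential alpha - 3h/|S|, and the set where the process stops has at
   most 5h/alpha points. *)

From mathcomp Require Import all_boot all_order all_algebra.
From mathcomp Require Import zify ring lra.
Set Implicit Arguments. Unset Strict Implicit. Unset Printing Implicit Defensive.
Import Order.TTheory GRing.Theory Num.Theory.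
Local Open Scope ring_scope.

Lemma mean_restrict_error (R : realFieldType) (A B K N h : R) :
  0 < K -> 0 < N -> 0 <= B <= N -> `|2 * A - B| <= h -> 0 <= 2 * K - N <= h ->
  `|A / K - B / N| <= h / K.
Proof.
move=> K0 N0 /andP[B0 BN] hA /andP[d0 dh].
have -> : A / K - B / N = ((2 * A - B) * N - B * (2 * K - N)) / (2 * K * N).
  by field; rewrite !gt_eqF.
have KN0 : 0 < 2 * K * N by rewrite !mulr_gt0.
rewrite normf_div (gtr0_norm KN0) ler_pdivrMr //.
have -> : h / K * (2 * K * N) = h * N + N * h by field; rewrite gt_eqF.
apply: le_trans (ler_normB _ _) _; apply: lerD.
- by rewrite normrM (gtr0_norm N0) ler_pM2r.
- by rewrite normrM (ger0_norm B0) (ger0_norm d0) ler_pM.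
Qed.

Section Discrepancy.
Variables (R : realFieldType) (U : finType).

Definition mean (f : U -> R) (S : {set U}) : R := #|S|%:R^-1 * \sum_(u in S) f u.

Lemma sq_answer_enum (f : U -> R) (S : {set U}) : sq_answer f (enum S) = mean f S.
Proof. by rewrite /sq_answer /mean -cardE big_enum. Qed.

Lemma sq_answer_uniq (f : U -> R) (x : seq U) :
  uniq x -> sq_answer f x = mean f [set u in x].
Proof.
move=> ux; rewrite /sq_answer /mean cardsE (card_uniqP ux) big_uniq //.
by congr (_ * _); apply: eq_bigl => u; rewrite inE.
Qed.

Lemma norm_signed_sum_color_class (S : {set U}) (b : {ffun U -> bool}) (c : bool)
    (f : U -> R) :
  `|\sum_(u in S) f u * (-1) ^+ b u|
    = `|2 * \sum_(u in [set u in S | b u == c]) f u - \sum_(u in S) f u|.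
Proof.
have sum_other_class : \sum_(u in S | b u != c) f u * (-1) ^+ b u
           = - ((-1) ^+ c * \sum_(u in S | b u != c) f u).
  rewrite mulr_sumr -sumrN; apply: eq_bigr => u /andP[_].
  by case: (b u); case: c => //= _; rewrite mulrC ?mulN1r ?mulr1 ?mul1r ?mulrN1 ?opprK.
set T := [set u in S | b u == c].
have split_class (g : U -> R) :
    \sum_(u in S) g u = \sum_(u in T) g u + \sum_(u in S | b u != c) g u.
  by rewrite (bigID (fun u => b u == c)) /=; congr (_ + _); apply: eq_bigl => u; rewrite inE.
have sum_class : \sum_(u in T) f u * (-1) ^+ b u = (-1) ^+ c * \sum_(u in T) f u.
  by rewrite mulr_sumr; apply: eq_bigr => u; rewrite inE => /andP[_ /eqP->]; rewrite mulrC.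
rewrite !split_class sum_class sum_other_class -mulrBr normrM normrX normrN1 expr1n mul1r.
by congr `|_|; ring.
Qed.

Lemma exists_majority_color (S : {set U}) (b : {ffun U -> bool}) :
  exists c, (#|S| <= 2 * #|[set u in S | b u == c]|)%N.
Proof.
have : #|[set u in S | b u == true]| + #|[set u in S | b u == false]| = #|S|.
  rewrite -(cardsID [set u | b u] S); congr (_ + _); apply: eq_card => u;
  by rewrite !inE; case: (b u); rewrite /= ?andbT ?andbF.
have [le_ft|lt_tf] := leqP #|[set u in S | b u == false]| #|[set u in S | b u == true]|.
- by exists true; lia.
- by exists false; lia.
Qed.

Variables (m : nat) (q : 'I_m -> U -> R).

Lemma qstar_norm_ge0 (S : {set U}) (b : {ffun U -> bool}) : 0 <= qstar_norm q S b.
Proof. exact: bigmax_ge_id. Qed.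

Lemma qstar_row_le_norm (S : {set U}) (b : {ffun U -> bool}) (r : option 'I_m) :
  `|\sum_(u in S) qstar_row q r u * (-1) ^+ b u| <= qstar_norm q S b.
Proof. exact: le_bigmax. Qed.

Lemma disc_star_attained (S : {set U}) : exists b, qstar_norm q S b = disc_star q S.
Proof.
apply: (big_ind (fun v => exists b, qstar_norm q S b = v)) => [|v w [bv <-] [bw <-]|b _].
- by exists [ffun=> false].
- by case: (leP (qstar_norm q S bv) (qstar_norm q S bw)); [exists bv | exists bw].
- by exists b.
Qed.

Lemma disc_star_ge0 (S : {set U}) : 0 <= disc_star q S.
Proof. by have [b <-] := disc_star_attained S; apply: qstar_norm_ge0. Qed.

Lemma disc_star_le_hdisc (w : nat) (S : {set U}) :
  (#|S| <= w)%N -> disc_star q S <= hdisc_star q w.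
Proof. by move=> Sw; apply: le_bigmax_cond. Qed.

Hypothesis q01 : forall i u, 0 <= q i u <= 1.

Lemma disc_star_halving (S : {set U}) (h : R) :
  (0 < #|S|)%N -> disc_star q S <= h ->
  exists2 T : {set U}, T \subset S &
    (#|S|%:R : R) <= 2 * #|T|%:R <= #|S|%:R + h
    /\ forall i, `|mean (q i) S - mean (q i) T| <= h / #|T|%:R.
Proof.
move=> S0 discS; have [b normb] := disc_star_attained S.
have [c Sc] := exists_majority_color S b.
set T := [set u in S | b u == c].
have row_bound r :
    `|2 * \sum_(u in T) qstar_row q r u - \sum_(u in S) qstar_row q r u| <= h.
  rewrite -norm_signed_sum_color_class; apply: le_trans discS.
  by rewrite -normb qstar_row_le_norm.
have := row_bound None; rewrite /= !sumr_const => /ler_normlP[lo hi].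
have SK : #|S|%:R <= 2 * #|T|%:R :> R by rewrite -natrM ler_nat.
have N0 : 0 < #|S|%:R :> R by rewrite ltr0n.
exists T; first by apply/subsetP => u; rewrite inE => /andP[].
split; first by apply/andP; split; lra.
move=> i; rewrite /mean distrC ![_^-1 * _]mulrC; apply: mean_restrict_error => //.
- lra.
- rewrite sumr_ge0 => [|u _]; last by have /andP[] := q01 i u.
  rewrite -sumr_const; apply: ler_sum => u _; by have /andP[] := q01 i u.
- exact: row_bound (Some i).
- by apply/andP; split; lra.
Qed.

Lemma hereditary_disc_descent (a h : R) (S : {set U}) : 0 < a < 1 ->
  (forall S' : {set U}, S' \subset S -> disc_star q S' <= h) -> 5 * h < a * #|S|%:R ->
  exists2 T : {set U}, T \subset S &
    a * #|T|%:R <= 5 * h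
    /\ forall i, `|mean (q i) S - mean (q i) T| <= a - 3 * h / #|S|%:R.
Proof.
move=> /andP[a0 a1]; have [k] := ubnP #|S|; elim: k S => // k IH S Sk herS big.
have h0 : 0 <= h := le_trans (disc_star_ge0 set0) (herS _ (sub0set S)).
have S0 : (0 < #|S|)%N by rewrite lt0n; apply: contraTneq big => ->; lra.
have N0 : 0 < #|S|%:R :> R by rewrite ltr0n.
have [T TS [/andP[NK KN] errT]] := disc_star_halving S0 (herS S (subxx S)).
set N := #|S|%:R in N0 big NK KN errT *; set K := #|T|%:R in NK KN errT *.
have K0 : 0 < K by lra.
have hN : 5 * h < N by nra.
have error_via_T i T' : `|mean (q i) S - mean (q i) T'|
                      <= h / K + `|mean (q i) T - mean (q i) T'|.
  by rewrite -[X in `|X|](subrKA (mean (q i) T)) (le_trans (ler_normD _ _)) ?lerD2r.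
have [bigT|smallT] := ltrP (5 * h) (a * K); last first.
  exists T => // ; split => // i; apply: le_trans (errT i) _.
  have : h / K <= 2 * h / N by rewrite ler_pdivrMr // mulrAC ler_pdivlMr //; nra.
  have : 5 * h / N < a by rewrite ltr_pdivrMr.
  lra.
have TS_lt : (#|T| < k)%N.
  by rewrite (leq_trans _ (ltnSE Sk)) // -(ltr_nat R) -/N -/K; lra.
have herT (S' : {set U}) : S' \subset T -> disc_star q S' <= h.
  by move=> S'T; apply/herS/(subset_trans S'T).
have [T' T'T [smallT' errT']] := IH T TS_lt herT bigT.
exists T'; first exact: subset_trans T'T TS.
split => // i; apply: le_trans (error_via_T i T') _.
have K3 : 3 * K <= 2 * N by lra.
have : 3 * h / N <= 2 * h / K by rewrite ler_pdivrMr // mulrAC ler_pdivlMr //; nra.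
have := errT' i; rewrite -/K; lra.
Qed.
End Discrepancy.

Theorem theorem6p8 (R : realFieldType) (alpha : R) (U : finType) (m : nat)
  (q : 'I_m -> U -> R) (n : nat) :
  0 < alpha < 1 ->
  (forall i u, 0 <= q i u <= 1) ->
  let s := 5 / alpha * hdisc_star q n in
  forall x : seq U, size x = n -> uniq x ->
  exists y : seq U, (size y)%:R <= s /\
    forall i : 'I_m, `| sq_answer (q i) x - sq_answer (q i) y | <= alpha.
Proof.
move=> alpha01 q01 s x sx ux; have /andP[a0 _] := alpha01.
set h := hdisc_star q n; set X := [set u in x].
have cardX : #|X| = n by rewrite cardsE -sx; apply/card_uniqP.
have herX (S : {set U}) : S \subset X -> disc_star q S <= h.
  by move=> SX; apply: disc_star_le_hdisc; rewrite -cardX subset_leq_card.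
have h0 : 0 <= h := le_trans (disc_star_ge0 q set0) (herX _ (sub0set X)).
have size_le_s k : alpha * k%:R <= 5 * h -> k%:R <= s.
  by rewrite /s mulrAC ler_pdivlMr // mulrC.
have [small|big] := leP (alpha * n%:R) (5 * h).
  exists x; rewrite sx size_le_s //; split=> // i.
  by rewrite subrr normr0 ltW.
rewrite -cardX in big.
have [T _ [smallT errT]] := hereditary_disc_descent q01 alpha01 herX big.
exists (enum T); rewrite -cardE size_le_s //; split=> // i.
rewrite sq_answer_uniq // sq_answer_enum; apply: le_trans (errT i) _.
by rewrite gerBl divr_ge0 ?mulr_ge0.
Qed.
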